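(* Let $0\le\underline{\tau}<\overline{\tau}<\infty$, $\gamma\ge0$, let $f$ be a piecewise continuous probability density supported on $[\underline{\tau},\overline{\tau}]$, and let $\beta:[0,\infty)\to(0,\infty)$ be continuous and decreasing with $\lim_{x\to+\infty}\beta(x)=0$ and such that $x\mapsto x\beta(x)$ is Lipschitz. Assume $\delta>0$. Then every nonnegative continuous solution $x$ of $$x'(t)=-\big(\delta+\beta(x(t))\big)x(t)+2\int_{\underline{\tau}}^{\overline{\tau}}e^{-\gamma\tau}f(\tau)\beta(x(t-\tau))x(t-\tau)\,d\tau,\qquad t\ge\overline{\tau},$$ (with continuous nonnegative initial values on $[0,\overline{\tau}]$) is bounded, i.e. $\limsup_{t\to+\infty}x(t)<+\infty$. *)

From Stdlib Require Import Reals.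
From Coquelicot Require Import Coquelicot.
Open Scope R_scope.

Definition piecewise_continuous (f : R -> R) (a b : R) : Prop :=
  exists (n : nat) (p : nat -> R),
    p 0%nat = a /\ p n = b /\
    (forall i, (i < n)%nat -> p i < p (S i)) /\
    (forall i, (i < n)%nat ->
       (forall t, p i < t < p (S i) -> continuous f t) /\
       (exists l, filterlim f (at_right (p i)) (locally l)) /\
       (exists r, filterlim f (at_left (p (S i))) (locally r))).

Definition prob_density_on (f : R -> R) (a b : R) : Prop :=
  (forall t, 0 <= f t) /\
  (forall t, t < a \/ b < t -> f t = 0) /\
  RInt f a b = 1.

Definition lipschitz_nonneg (g : R -> R) : Prop :=
  exists L, forall u v, 0 <= u -> 0 <= v -> Rabs (g u - g v) <= L * Rabs (u - v).

(* At a running maximum [ts] of [x] the derivative is nonnegative.  Since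
   [u beta(u) = o(u)], the delayed term is at most [K + (delta/4) x(ts)], so the
   right-hand side of the equation is at most [2K - (delta/2) x(ts)], which is
   negative once [x(ts) > 4K/delta].  Hence [x] never exceeds the larger of
   [4K/delta] and its maximum on the initial interval [[0, tu]]. *)

From Stdlib Require Import Reals Lra Lia.
From Coquelicot Require Import Coquelicot.
Open Scope R_scope.

Definition extend_piece (f : R -> R) (a b l r t : R) : R :=
  if Rle_dec t a then l else if Rle_dec b t then r else f t.

Section PieceExtension.

Variables (f : R -> R) (a b l r : R).
Hypothesis Hab : a < b.
Hypothesis Hf : forall t, a < t < b -> continuous f t.
Hypothesis Hl : filterlim f (at_right a) (locally l).
Hypothesis Hr : filterlim f (at_left b) (locally r).

Lemma extend_piece_inside t : a < t < b -> extend_piece f a b l r t = f t.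
Proof.
  intros Ht. unfold extend_piece.
  destruct (Rle_dec t a); [lra|]. destruct (Rle_dec b t); [lra|]. reflexivity.
Qed.

Lemma extend_piece_continuous z : a <= z <= b -> continuous (extend_piece f a b l r) z.
Proof.
  intros Hz.
  destruct (Req_dec z a) as [->|Hza]; [|destruct (Req_dec z b) as [->|Hzb]].
  - assert (Ea : extend_piece f a b l r a = l).
    { unfold extend_piece. destruct (Rle_dec a a); [reflexivity|lra]. }
    unfold continuous. rewrite Ea. apply filterlim_locally. intros eps.
    assert (Hnear : locally a (fun y => a < y -> ball l eps (f y)))
      by exact (Hl _ (locally_ball l eps)).
    apply (filter_imp (fun y => (a < y -> ball l eps (f y)) /\ y < b));
      [|exact (filter_and _ _ Hnear (open_lt b a Hab))].
    intros y [Hy Hyb]. destruct (Rle_dec y a) as [Hya|Hya].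
    + unfold extend_piece. destruct (Rle_dec y a); [apply ball_center|lra].
    + rewrite extend_piece_inside by lra. apply Hy. lra.
  - assert (Eb : extend_piece f a b l r b = r).
    { unfold extend_piece. destruct (Rle_dec b a); [lra|].
      destruct (Rle_dec b b); [reflexivity|lra]. }
    unfold continuous. rewrite Eb. apply filterlim_locally. intros eps.
    assert (Hnear : locally b (fun y => y < b -> ball r eps (f y)))
      by exact (Hr _ (locally_ball r eps)).
    apply (filter_imp (fun y => (y < b -> ball r eps (f y)) /\ a < y));
      [|exact (filter_and _ _ Hnear (open_gt a b Hab))].
    intros y [Hy Hya]. destruct (Rle_dec b y) as [Hby|Hby].
    + unfold extend_piece. destruct (Rle_dec y a); [lra|].
      destruct (Rle_dec b y); [apply ball_center|lra].
    + rewrite extend_piece_inside by lra. apply Hy. lra.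
  - apply (continuous_ext_loc _ f); [|apply Hf; lra].
    apply (filter_imp (fun y => a < y /\ y < b)).
    + intros y Hy. symmetry. apply extend_piece_inside. exact Hy.
    + apply (open_and _ _ (open_gt a) (open_lt b)). lra.
Qed.

Lemma ex_RInt_piece_mult (phi : R -> R) :
  (forall z, a <= z <= b -> continuous phi z) ->
  ex_RInt (fun t => f t * phi t) a b.
Proof.
  intros Hphi.
  apply (ex_RInt_ext (fun t => extend_piece f a b l r t * phi t)).
  - intros t Ht. rewrite Rmin_left, Rmax_right in Ht by lra.
    rewrite extend_piece_inside by exact Ht. reflexivity.
  - apply (@ex_RInt_continuous R_CompleteNormedModule). intros z Hz.
    rewrite Rmin_left, Rmax_right in Hz by lra.
    apply (continuous_mult (extend_piece f a b l r) phi);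
      [apply extend_piece_continuous|apply Hphi]; exact Hz.
Qed.

End PieceExtension.

Lemma ex_RInt_piecewise_continuous_mult (f phi : R -> R) (a b : R) :
  piecewise_continuous f a b ->
  (forall z, a <= z <= b -> continuous phi z) ->
  ex_RInt (fun t => f t * phi t) a b.
Proof.
  intros [n [p [Hp0 [Hpn [Hinc Hpieces]]]]] Hphi.
  assert (Hmono : forall i j, (i <= j <= n)%nat -> p i <= p j).
  { intros i j [Hij Hjn]. induction Hij; [lra|].
    assert (p m < p (S m)) by (apply Hinc; lia).
    specialize (IHHij ltac:(lia)). lra. }
  assert (Hk : forall k, (k <= n)%nat -> ex_RInt (fun t => f t * phi t) (p 0%nat) (p k)).
  { induction k as [|k IHk]; intros Hkn; [apply ex_RInt_point|].
    apply ex_RInt_Chasles with (p k); [apply IHk; lia|].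
    destruct (Hpieces k ltac:(lia)) as [Hc [[l Hl] [r Hr]]].
    apply (ex_RInt_piece_mult f _ _ l r); [apply Hinc; lia|exact Hc|exact Hl|exact Hr|].
    intros z Hz.
    assert (p 0%nat <= p k) by (apply Hmono; lia).
    assert (p (S k) <= p n) by (apply Hmono; lia).
    apply Hphi. lra. }
  rewrite <- Hp0, <- Hpn. apply Hk. lia.
Qed.

Lemma RInt_density_mult_le (f g : R -> R) (a b C : R) :
  a <= b -> piecewise_continuous f a b -> prob_density_on f a b ->
  (forall z, a <= z <= b -> continuous g z) ->
  (forall z, a <= z <= b -> g z <= C) ->
  RInt (fun t => f t * g t) a b <= C.
Proof.
  intros Hab Hpc [Hf0 [_ Hf1]] Hg HgC.
  assert (Hexf : ex_RInt f a b).
  { apply (ex_RInt_ext (fun t => f t * 1)); [intros t _; apply Rmult_1_r|].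
    apply ex_RInt_piecewise_continuous_mult; [exact Hpc|intros; apply continuous_const]. }
  assert (Hmass : RInt (fun t => scal C (f t)) a b = C).
  { rewrite (@RInt_scal R_CompleteNormedModule), Hf1 by exact Hexf.
    change (C * 1 = C). ring. }
  rewrite <- Hmass. apply RInt_le.
  - exact Hab.
  - apply ex_RInt_piecewise_continuous_mult; assumption.
  - apply (@ex_RInt_scal R_NormedModule). exact Hexf.
  - intros t Ht. change (scal C (f t)) with (C * f t). rewrite Rmult_comm.
    apply Rmult_le_compat_r; [apply Hf0|apply HgC; lra].
Qed.

Lemma mul_decreasing_to_zero_sublinear (beta : R -> R) (eps : R) :
  (forall u, 0 <= u -> 0 < beta u) ->
  (forall u v, 0 <= u -> u <= v -> beta v <= beta u) ->
  is_lim beta p_infty 0 -> 0 < eps ->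
  exists K, forall u M, 0 <= u <= M -> u * beta u <= K + eps * M.
Proof.
  intros Hpos Hdecr Hlim Heps.
  destruct (Hlim (fun y => Rabs (y - 0) < eps)) as [A HA].
  { exists (mkposreal _ Heps). intros y Hy. exact Hy. }
  set (A' := Rmax 0 A).
  assert (HA' : 0 <= A' /\ A <= A') by (split; [apply Rmax_l|apply Rmax_r]).
  assert (Hb0 : 0 < beta 0) by (apply Hpos; lra).
  exists (A' * beta 0). intros u M [Hu HuM].
  assert (Hbu := Hpos u Hu).
  destruct (Rle_or_lt u A') as [Hsmall|Hlarge].
  - assert (beta u <= beta 0) by (apply Hdecr; lra). nra.
  - assert (Hbeps := HA u ltac:(lra)). simpl in Hbeps.
    apply Rabs_def2 in Hbeps. nra.
Qed.

Lemma running_max_exists (x : R -> R) (t : R) :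
  (forall s, 0 <= s -> filterlim x (within (fun u => 0 <= u) (locally s)) (locally (x s))) ->
  0 <= t -> exists ts, 0 <= ts <= t /\ forall s, 0 <= s <= t -> x s <= x ts.
Proof.
  intros Hx Ht.
  set (h := fun s => x (Rmax 0 s)).
  assert (Hh : forall c, continuity_pt h c).
  { intros c. apply continuity_pt_filterlim. unfold h.
    apply (filterlim_comp _ _ _ (Rmax 0) x _
             (within (fun u => 0 <= u) (locally (Rmax 0 c)))); [|apply Hx, Rmax_l].
    intros P [eps HP]. exists eps. intros y Hy. apply HP; [|apply Rmax_l].
    change (Rabs (Rmax 0 y - Rmax 0 c) < eps). change (Rabs (y - c) < eps) in Hy.
    eapply Rle_lt_trans; [|exact Hy].
    unfold Rmax. destruct (Rle_dec 0 y), (Rle_dec 0 c);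
      unfold Rabs; repeat destruct Rcase_abs; lra. }
  destruct (continuity_ab_maj h 0 t Ht (fun c _ => Hh c)) as [ts [Hmax Hts]].
  exists ts. split; [exact Hts|]. intros s Hs.
  specialize (Hmax s Hs). unfold h in Hmax.
  rewrite !Rmax_right in Hmax by lra. exact Hmax.
Qed.

Lemma is_derive_nonneg_at_left_max (x : R -> R) (t l d : R) :
  is_derive x t l -> 0 < d -> (forall s, t - d < s < t -> x s <= x t) -> 0 <= l.
Proof.
  intros Hder Hd Hmax.
  destruct (Rle_or_lt 0 l) as [|Hl]; [assumption|exfalso].
  apply is_derive_Reals in Hder.
  destruct (Hder (- l / 2)) as [e He]; [lra|].
  assert (He0 := cond_pos e).
  set (h := - Rmin (e / 2) (d / 2)).
  assert (Hmin : 0 < Rmin (e / 2) (d / 2) <= e / 2 /\ Rmin (e / 2) (d / 2) <= d / 2).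
  { split; [split; [apply Rmin_glb_lt; lra|apply Rmin_l]|apply Rmin_r]. }
  assert (Hq := He h ltac:(unfold h; lra) ltac:(rewrite Rabs_left; unfold h; lra)).
  assert (Hq0 : 0 <= (x (t + h) - x t) / h).
  { replace ((x (t + h) - x t) / h) with ((x t - x (t + h)) * / (- h))
      by (field; unfold h; lra).
    apply Rmult_le_pos.
    - assert (x (t + h) <= x t) by (apply Hmax; unfold h; lra). lra.
    - left. apply Rinv_0_lt_compat. unfold h. lra. }
  apply Rabs_def2 in Hq. lra.
Qed.

Lemma continuous_of_within_nonneg (x : R -> R) (s : R) : 0 < s ->
  filterlim x (within (fun u => 0 <= u) (locally s)) (locally (x s)) -> continuous x s.
Proof.
  intros Hs Hx P HP. change (locally s (fun u => P (x u))).
  apply (filter_imp (fun u => 0 < u /\ (0 <= u -> P (x u)))).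
  - intros u [Hu HPu]. apply HPu. lra.
  - apply filter_and; [exact (open_gt 0 s Hs)|exact (Hx P HP)].
Qed.

Lemma lipschitz_nonneg_comp_continuous (g x : R -> R) (s : R) :
  lipschitz_nonneg g -> locally s (fun y => 0 <= x y) -> continuous x s ->
  continuous (fun y => g (x y)) s.
Proof.
  intros [L HL] Hpos Hx.
  assert (HL1 : 0 < Rabs L + 1) by (assert (0 <= Rabs L) by apply Rabs_pos; lra).
  assert (Hxs : 0 <= x s) by exact (locally_singleton _ _ Hpos).
  apply filterlim_locally. intros eps.
  assert (Hd : 0 < eps / (Rabs L + 1)) by (apply Rdiv_lt_0_compat; [apply cond_pos|lra]).
  apply (filter_imp (fun y => 0 <= x y /\ ball (x s) (mkposreal _ Hd) (x y)));
    [|exact (filter_and _ _ Hpos (proj1 (filterlim_locally _ _) Hx (mkposreal _ Hd)))].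
  intros y [Hy Hxy].
  change (Rabs (g (x y) - g (x s)) < eps).
  change (Rabs (x y - x s) < eps / (Rabs L + 1)) in Hxy.
  assert (Habs : 0 <= Rabs (x y - x s)) by apply Rabs_pos.
  assert (HLabs : L <= Rabs L) by apply Rle_abs.
  eapply Rle_lt_trans; [apply HL; assumption|].
  apply Rle_lt_trans with ((Rabs L + 1) * Rabs (x y - x s)); [nra|].
  replace (pos eps) with ((Rabs L + 1) * (eps / (Rabs L + 1))) by (field; lra).
  apply Rmult_lt_compat_l; assumption.
Qed.

Lemma delay_integral_le (tl tu gamma ts C : R) (f beta x : R -> R) :
  0 <= tl -> tl < tu -> 0 <= gamma -> tu < ts ->
  piecewise_continuous f tl tu -> prob_density_on f tl tu ->
  (forall u, 0 <= u -> 0 <= beta u) -> lipschitz_nonneg (fun u => u * beta u) ->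
  (forall s, 0 <= s -> 0 <= x s) -> (forall s, 0 < s -> continuous x s) ->
  (forall tau, tl <= tau <= tu -> x (ts - tau) * beta (x (ts - tau)) <= C) ->
  RInt (fun tau => exp (- gamma * tau) * f tau * beta (x (ts - tau)) * x (ts - tau))
    tl tu <= C.
Proof.
  intros Htl Htlu Hgamma Hts Hpc Hdens Hbeta Hlip Hx0 Hx HC.
  set (phi := fun tau => exp (- gamma * tau) * (x (ts - tau) * beta (x (ts - tau)))).
  assert (Hphi : forall tau, exp (- gamma * tau) * f tau * beta (x (ts - tau)) * x (ts - tau)
                             = f tau * phi tau) by (intros; unfold phi; ring).
  rewrite (RInt_ext _ _ _ _ (fun tau _ => Hphi tau)).
  apply RInt_density_mult_le; [lra|exact Hpc|exact Hdens| |].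
  - intros z Hz. unfold phi.
    apply (continuous_mult (fun tau => exp (- gamma * tau))
                           (fun tau => x (ts - tau) * beta (x (ts - tau)))).
    { apply (@ex_derive_continuous R_AbsRing R_NormedModule). auto_derive. trivial. }
    apply (continuous_comp (fun tau => ts - tau) (fun s => x s * beta (x s))).
    { apply (@ex_derive_continuous R_AbsRing R_NormedModule). auto_derive. trivial. }
    apply (lipschitz_nonneg_comp_continuous (fun u => u * beta u)); [exact Hlip| |apply Hx; lra].
    apply (filter_imp (fun y => 0 < y)); [intros y Hy; apply Hx0; lra|].
    apply open_gt. lra.
  - intros tau Htau. unfold phi.
    assert (Hexp : exp (- gamma * tau) <= 1).
    { rewrite <- exp_0. assert (Hneg : - gamma * tau <= 0) by nra.
      destruct (Rle_lt_or_eq_dec _ _ Hneg) as [Hlt|Heq].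
      - left. apply exp_increasing, Hlt.
      - rewrite Heq. apply Rle_refl. }
    assert (Hxt : 0 <= x (ts - tau)) by (apply Hx0; lra).
    assert (0 <= x (ts - tau) * beta (x (ts - tau))) by (apply Rmult_le_pos; auto).
    assert (0 < exp (- gamma * tau)) by apply exp_pos.
    specialize (HC tau Htau). nra.
Qed.

Theorem proposition2p2
  (tl tu gamma delta : R) (f beta x : R -> R)
  (Htl : 0 <= tl) (Htlu : tl < tu) (Hgamma : 0 <= gamma)
  (Hf_pc : piecewise_continuous f tl tu)
  (Hf_dens : prob_density_on f tl tu)
  (Hbeta_pos : forall u, 0 <= u -> 0 < beta u)
  (Hbeta_cont : forall u, 0 <= u ->
      filterlim beta (within (fun s => 0 <= s) (locally u)) (locally (beta u)))
  (Hbeta_decr : forall u v, 0 <= u -> u <= v -> beta v <= beta u)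
  (Hbeta_lim : is_lim beta p_infty 0)
  (Hbeta_lip : lipschitz_nonneg (fun u => u * beta u))
  (Hdelta : 0 < delta)
  (Hx_nonneg : forall t, 0 <= t -> 0 <= x t)
  (Hx_cont : forall t, 0 <= t ->
      filterlim x (within (fun s => 0 <= s) (locally t)) (locally (x t)))
  (Hx_ode : forall t, tu < t ->
      is_derive x t
        (- (delta + beta (x t)) * x t
         + 2 * RInt (fun tau => exp (- gamma * tau) * f tau
                                * beta (x (t - tau)) * x (t - tau)) tl tu)) :
  exists M : R, forall t, 0 <= t -> x t <= M.
Proof.
  destruct (mul_decreasing_to_zero_sublinear beta (delta / 4)
              Hbeta_pos Hbeta_decr Hbeta_lim ltac:(lra)) as [K HK].
  destruct (running_max_exists x tu Hx_cont ltac:(lra)) as [t0 [_ Hinit]].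
  exists (Rmax (x t0) (4 * K / delta)). intros t Ht.
  destruct (running_max_exists x t Hx_cont Ht) as [ts [Hts Hmax]].
  apply Rle_trans with (x ts); [apply Hmax; lra|].
  destruct (Rle_or_lt (x ts) (4 * K / delta)) as [Hsmall|Hbig].
  { eapply Rle_trans; [exact Hsmall|apply Rmax_r]. }
  destruct (Rle_or_lt ts tu) as [Hearly|Hlate].
  { eapply Rle_trans; [apply Hinit; lra|apply Rmax_l]. }
  exfalso.
  assert (Hslope := is_derive_nonneg_at_left_max x ts _ ts (Hx_ode ts Hlate)
                      ltac:(lra) ltac:(intros s Hs; apply Hmax; lra)).
  assert (Hdelay := delay_integral_le tl tu gamma ts (K + delta / 4 * x ts) f beta x
            Htl Htlu Hgamma Hlate Hf_pc Hf_dens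
            (fun u Hu => Rlt_le _ _ (Hbeta_pos u Hu)) Hbeta_lip Hx_nonneg
            (fun s Hs => continuous_of_within_nonneg x s Hs (Hx_cont s ltac:(lra)))
            ltac:(intros tau Htau;
                  apply HK; split; [apply Hx_nonneg|apply Hmax]; lra)).
  assert (Hxts : 0 <= x ts) by (apply Hx_nonneg; lra).
  assert (0 <= beta (x ts) * x ts) by (apply Rmult_le_pos; [apply Rlt_le, Hbeta_pos|]; lra).
  apply Rlt_div_l in Hbig; [|lra].
  nra.
Qed.
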